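(* Consider a multi-task model with $M$ tasks. Let $\Phi(W;x)\in\mathbb{R}^p$ be a shared representation of input $x$, differentiable in the shared parameters $W\in\mathbb{R}^d$, with Jacobian $\nabla_W\Phi(W;x)\in\mathbb{R}^{p\times d}$; let $\phi=(\phi_1,\dots,\phi_M)$ be task-specific parameters, and for each $m$ let $f_m(\Phi,\phi_m;y)$ be a loss differentiable in $\Phi$. Let $\mathcal{D}$ be a distribution over pairs $(x,y)$ for which $\mathbb{E}_{(x,y)\sim\mathcal{D}}[\nabla_W\Phi(W;x)]$ exists, and let $\mathcal{B}$ be a finite batch of pairs $(x,y)$. Define, for each $m$, \[ g^W_m=\frac{1}{|\mathcal{B}|}\sum_{(x,y)\in\mathcal{B}}\nabla_W\Phi(W;x)^\top\nabla_\Phi f_m(\Phi(W;x),\phi_m;y)\in\mathbb{R}^d, \qquad g^\Phi_m=\frac{1}{|\mathcal{B}|}\sum_{(x,y)\in\mathcal{B}}\nabla_\Phi f_m(\Phi(W;x),\phi_m;y)\in\mathbb{R}^p, \] (the parameter gradient and the representation gradient of the batch loss of task $m$), and let $\nabla_W F\in\mathbb{R}^{d\times M}$ and $\nabla_\Phi F\in\mathbb{R}^{p\times M}$ be the matrices with columns $g^W_m$ and $g^\Phi_m$ respectively. For $\lambda\in\Delta^M$ define the residual \[ R_{\mathcal{B}}=\sum_{m=1}^M\sum_{(x,y)\in\mathcal{B}}\frac{\lambda_m}{|\mathcal{B}|}\Big(\nabla_W\Phi(W;x)-\mathbb{E}_{(x',y')\sim\mathcal{D}}[\nabla_W\Phi(W;x')]\Big)^\top\nabla_\Phi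 f_m(\Phi(W;x),\phi_m;y). \] Suppose there exist $\lambda\in\Delta^M$ and $\ell,\epsilon,\delta>0$ such that \[ \big\|\mathbb{E}_{(x,y)\sim\mathcal{D}}[\nabla_W\Phi(W;x)]\big\|_2\le\ell,\qquad \|\nabla_\Phi F\,\lambda\|\le\epsilon,\qquad \|R_{\mathcal{B}}\|\le\delta . \] Then $\|\nabla_W F\,\lambda\|\le \ell\epsilon+\delta$.
   Context: $\Delta^M=\{\lambda\in\mathbb{R}^M:\lambda_i\ge0,\ \sum_i\lambda_i=1\}$ is the probability simplex. $\|\cdot\|$ is the Euclidean norm of a vector and $\|\cdot\|_2$ the spectral norm of a matrix. $\nabla_\Phi f_m(\Phi,\phi_m;y)$ is the gradient of $f_m$ with respect to its first argument. *)

From HB Require Import structures.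
From mathcomp Require Import all_boot all_order all_algebra.
From mathcomp Require Import all_classical all_reals all_analysis.
Set Implicit Arguments. Unset Strict Implicit. Unset Printing Implicit Defensive.
Import Order.TTheory GRing.Theory Num.Theory.
Import numFieldNormedType.Exports.
Local Open Scope classical_set_scope.
Local Open Scope ring_scope.

Definition enorm (R : realType) (n : nat) (v : 'cV[R]_n) : R :=
  Num.sqrt (\sum_(i < n) v i 0 ^+ 2).

Definition specnorm (R : realType) (m n : nat) (A : 'M[R]_(m, n)) : R :=
  sup [set enorm (A *m v) | v in [set v : 'cV[R]_n | enorm v <= 1]].

Definition simplex (R : realType) (M : nat) : set 'cV[R]_M :=
  [set l | (forall i, 0 <= l i 0) /\ \sum_(i < M) l i 0 = 1].

(* gradient of a scalar function on 'rV_p, as a column vector 'cV_p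
   (the mathcomp-analysis jacobian of the 'rV_1-valued function) *)
Definition grad (R : realType) (p : nat) (f : 'rV[R]_p -> R) (u : 'rV[R]_p)
  : 'cV[R]_p := jacobian (fun v => (f v)%:M : 'rV[R]_1) u.

Definition expect_mx (R : realType) (dT : measure_display) (T : measurableType dT)
  (P : probability T R) (m n : nat) (A : T -> 'M[R]_(m, n)) : 'M[R]_(m, n) :=
  \matrix_(i, j) fine (\int[P]_z (A z i j)%:E)%E.

From HB Require Import structures.
From mathcomp Require Import all_boot all_order all_algebra.
From mathcomp Require Import all_classical all_reals all_analysis.
From mathcomp Require Import ring lra.
Import Order.TTheory GRing.Theory Num.Theory.
Import numFieldNormedType.Exports.
Local Open Scope classical_set_scope.
Local Open Scope ring_scope.

(* Averaging over the batch commutes with the linear maps involved, so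
   [gradWF *m lambda] splits exactly as [RB + EJ^T *m (gradPhiF *m lambda)].
   The first term has norm at most [delta]; the second is at most
   [specnorm EJ^T * eps = specnorm EJ * eps <= l * eps], where the spectral
   norm of the transpose is controlled through Cauchy-Schwarz:
   |A^T u|^2 = <u, A A^T u> <= |u| |A (A^T u)| <= |u| |A|_2 |A^T u|. *)

Section EuclideanNorm.
Context {R : realType}.

Definition dot {n} (u v : 'cV[R]_n) : R := (u^T *m v) 0 0.

Lemma dotE {n} (u v : 'cV[R]_n) : dot u v = \sum_i u i 0 * v i 0.
Proof. by rewrite /dot mxE; apply: eq_bigr => i _; rewrite mxE. Qed.

Lemma dotC {n} (u v : 'cV[R]_n) : dot u v = dot v u.
Proof. by rewrite !dotE; apply: eq_bigr => i _; rewrite mulrC. Qed.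

Lemma dotDl {n} (u v w : 'cV[R]_n) : dot (u + v) w = dot u w + dot v w.
Proof. by rewrite /dot linearD /= mulmxDl mxE. Qed.

Lemma dot_mulmxr {m n} (A : 'M[R]_(m, n)) (u : 'cV[R]_m) (v : 'cV[R]_n) :
  dot u (A *m v) = dot (A^T *m u) v.
Proof. by rewrite /dot trmx_mul trmxK mulmxA. Qed.

Lemma dotvv_ge0 {n} (u : 'cV[R]_n) : 0 <= dot u u.
Proof. by rewrite dotE; apply: sumr_ge0 => i _; rewrite -expr2 sqr_ge0. Qed.

Lemma enorm_dot {n} (u : 'cV[R]_n) : enorm u = Num.sqrt (dot u u).
Proof. by rewrite /enorm dotE; congr Num.sqrt; apply: eq_bigr => i _; rewrite expr2. Qed.

Lemma enorm_ge0 {n} (u : 'cV[R]_n) : 0 <= enorm u.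
Proof. by rewrite enorm_dot sqrtr_ge0. Qed.

Lemma enorm_sqr {n} (u : 'cV[R]_n) : enorm u ^+ 2 = dot u u.
Proof. by rewrite enorm_dot sqr_sqrtr // dotvv_ge0. Qed.

Lemma enorm_le {n} (u : 'cV[R]_n) (c : R) : 0 <= c -> dot u u <= c ^+ 2 -> enorm u <= c.
Proof. by move=> c_ge0 uc; rewrite enorm_dot -(ger0_norm c_ge0) -sqrtr_sqr ler_wsqrtr. Qed.

Lemma enorm0 n : enorm (0 : 'cV[R]_n) = 0.
Proof. by rewrite /enorm big1 ?sqrtr0 // => i _; rewrite mxE expr0n. Qed.

Lemma enormZ {n} (c : R) (u : 'cV[R]_n) : enorm (c *: u) = `|c| * enorm u.
Proof.
rewrite /enorm -sqrtr_sqr -sqrtrM ?sqr_ge0 // mulr_sumr; congr Num.sqrt.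
by apply: eq_bigr => i _; rewrite mxE exprMn.
Qed.

Lemma lagrange_identity {n} (u v : 'cV[R]_n) :
  \sum_i \sum_j (u i 0 * v j 0 - u j 0 * v i 0) ^+ 2
    = 2 * (dot u u * dot v v - dot u v ^+ 2).
Proof.
have expand i j : (u i 0 * v j 0 - u j 0 * v i 0) ^+ 2 =
    (u i 0 * u i 0) * (v j 0 * v j 0) + (v i 0 * v i 0) * (u j 0 * u j 0)
    - 2 * ((u i 0 * v i 0) * (u j 0 * v j 0)) by ring.
under eq_bigr => i _ do (under eq_bigr => j _ do rewrite expand;
                         rewrite sumrB big_split /= -!mulr_sumr).
rewrite sumrB big_split /= -!dotE -!mulr_suml -mulr_sumr -mulr_suml -!dotE expr2.
ring.
Qed.

Lemma dot_sqr_le {n} (u v : 'cV[R]_n) : dot u v ^+ 2 <= dot u u * dot v v.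
Proof.
have : 0 <= \sum_i \sum_j (u i 0 * v j 0 - u j 0 * v i 0) ^+ 2.
  by apply: sumr_ge0 => i _; apply: sumr_ge0 => j _; apply: sqr_ge0.
rewrite lagrange_identity; lra.
Qed.

Lemma dot_le_enorm {n} (u v : 'cV[R]_n) : dot u v <= enorm u * enorm v.
Proof.
rewrite !enorm_dot -sqrtrM ?dotvv_ge0 //.
by rewrite (le_trans (ler_norm _)) // -sqrtr_sqr ler_wsqrtr // dot_sqr_le.
Qed.

Lemma enormD {n} (u v : 'cV[R]_n) : enorm (u + v) <= enorm u + enorm v.
Proof.
apply: enorm_le; first by rewrite addr_ge0 ?enorm_ge0.
rewrite !dotDl ![dot _ (u + v)]dotC !dotDl (dotC v u) sqrrD !enorm_sqr mulr2n.
by have := dot_le_enorm u v; lra.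
Qed.

End EuclideanNorm.

Section SpectralNorm.
Context {R : realType}.

Definition frobnorm {m n} (A : 'M[R]_(m, n)) : R := Num.sqrt (\sum_i \sum_j A i j ^+ 2).

Lemma enorm_mulmx_le_frobnorm {m n} (A : 'M[R]_(m, n)) (v : 'cV[R]_n) :
  enorm (A *m v) <= frobnorm A * enorm v.
Proof.
rewrite /frobnorm !enorm_dot -sqrtrM; last first.
  by apply: sumr_ge0 => i _; apply: sumr_ge0 => j _; apply: sqr_ge0.
rewrite ler_wsqrtr // [dot (A *m v) _]dotE mulr_suml; apply: ler_sum => i _.
have rowE : (A *m v) i 0 = dot (row i A)^T v.
  by rewrite dotE mxE; apply: eq_bigr => j _; rewrite !mxE.
have row_sqrE : \sum_j A i j ^+ 2 = dot (row i A)^T (row i A)^T.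
  by rewrite dotE; apply: eq_bigr => j _; rewrite !mxE expr2.
by rewrite rowE row_sqrE -expr2 dot_sqr_le.
Qed.

Lemma specnorm_has_ubound {m n} (A : 'M[R]_(m, n)) :
  has_ubound [set enorm (A *m v) | v in [set v : 'cV[R]_n | enorm v <= 1]].
Proof.
exists (frobnorm A) => _ [v v_le1 <-].
by rewrite (le_trans (enorm_mulmx_le_frobnorm A v)) // ler_piMr ?sqrtr_ge0.
Qed.

Lemma specnorm_ge0 {m n} (A : 'M[R]_(m, n)) : 0 <= specnorm A.
Proof.
apply: (ub_le_sup (specnorm_has_ubound A)).
by exists 0; rewrite /= ?mulmx0 enorm0.
Qed.

Lemma enorm_mulmx_le {m n} (A : 'M[R]_(m, n)) (v : 'cV[R]_n) :
  enorm (A *m v) <= specnorm A * enorm v.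
Proof.
have [v0|v_neq0] := eqVneq (enorm v) 0.
  by have := enorm_mulmx_le_frobnorm A v; rewrite v0 !mulr0.
have v_gt0 : 0 < enorm v by rewrite lt0r v_neq0 enorm_ge0.
have unit_v : enorm ((enorm v)^-1 *: v) = 1.
  by rewrite enormZ ger0_norm ?invr_ge0 ?enorm_ge0 // mulVf.
have : enorm (A *m ((enorm v)^-1 *: v)) <= specnorm A.
  by apply: (ub_le_sup (specnorm_has_ubound A)); exists ((enorm v)^-1 *: v); rewrite /= ?unit_v.
by rewrite -scalemxAr enormZ ger0_norm ?invr_ge0 ?enorm_ge0 // mulrC ler_pdivrMr.
Qed.

Lemma enorm_trmx_mulmx_le {m n} (A : 'M[R]_(m, n)) (u : 'cV[R]_m) :
  enorm (A^T *m u) <= specnorm A * enorm u.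
Proof.
set e := enorm (A^T *m u).
have [e0|e_neq0] := eqVneq e 0; first by rewrite e0 mulr_ge0 ?specnorm_ge0 ?enorm_ge0.
have e_gt0 : 0 < e by rewrite lt0r e_neq0 enorm_ge0.
have : e ^+ 2 <= enorm u * (specnorm A * e).
  rewrite /e enorm_sqr -dot_mulmxr (le_trans (dot_le_enorm _ _)) //.
  by rewrite ler_wpM2l ?enorm_ge0 // enorm_mulmx_le.
by rewrite expr2 mulrA [enorm u * _]mulrC ler_pM2r.
Qed.

End SpectralNorm.

Lemma mulmx_cols {R : comPzRingType} {k M} (h : 'I_M -> 'cV[R]_k) (lambda : 'cV[R]_M) :
  (\matrix_(i, m) h m i 0) *m lambda = \sum_m lambda m 0 *: h m.
Proof.
apply/matrixP => i j; rewrite summxE (ord1 j) !mxE.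
by apply: eq_bigr => m _; rewrite !mxE mulrC.
Qed.

Lemma batch_gradient_centered {R : comPzRingType} {T : Type} {M d p : nat}
    (J : T -> 'M[R]_(p, d)) (E : 'M[R]_(p, d)) (g : 'I_M -> T -> 'cV[R]_p)
    (B : seq T) (c : R) (lambda : 'cV[R]_M) :
  \sum_m lambda m 0 *: (c *: \sum_(z <- B) (J z)^T *m g m z)
  = \sum_m \sum_(z <- B) (lambda m 0 * c) *: ((J z - E)^T *m g m z)
    + E^T *m \sum_m lambda m 0 *: (c *: \sum_(z <- B) g m z).
Proof.
rewrite mulmx_sumr -big_split /=; apply: eq_bigr => m _.
rewrite -!scalemxAr mulmx_sumr !scaler_sumr -big_split; apply: eq_bigr => z _.
by rewrite linearB /= mulmxBl !scalerA scalerBr subrK.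
Qed.

Theorem theorem1 (R : realType) (M d p : nat)
  (dX dY : measure_display) (X : measurableType dX) (Y : measurableType dY)
  (Theta : Type)
  (Phi : 'rV[R]_d -> X -> 'rV[R]_p)            (* shared representation Phi(W;x) *)
  (f : 'I_M -> 'rV[R]_p -> Theta -> Y -> R)     (* task losses f_m(Phi, phi_m; y) *)
  (W : 'rV[R]_d) (phi : 'I_M -> Theta)
  (D : probability (X * Y)%type R) (B : seq (X * Y)%type)
  (HPhi : forall x, differentiable (fun w => Phi w x) W)
  (Hf : forall m (u : 'rV[R]_p) y, differentiable (fun v => f m v (phi m) y) u)
  (HE : forall i j, D.-integrable setT
          (fun z : (X * Y)%type => ((jacobian (fun w => Phi w z.1) W)^T i j)%:E))
  (lambda : 'cV[R]_M) (l eps delta : R) :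
  let JPhi (x : X) : 'M[R]_(p, d) := (jacobian (fun w => Phi w x) W)^T in
  let EJ : 'M[R]_(p, d) := expect_mx D (fun z : (X * Y)%type => JPhi z.1) in
  let gf (m : 'I_M) (z : (X * Y)%type) : 'cV[R]_p :=
      grad (fun v => f m v (phi m) z.2) (Phi W z.1) in
  let nB : R := (size B)%:R in
  let gW (m : 'I_M) : 'cV[R]_d := nB^-1 *: \sum_(z <- B) (JPhi z.1)^T *m gf m z in
  let gPhi (m : 'I_M) : 'cV[R]_p := nB^-1 *: \sum_(z <- B) gf m z in
  let gradWF : 'M[R]_(d, M) := \matrix_(i, m) gW m i 0 in
  let gradPhiF : 'M[R]_(p, M) := \matrix_(i, m) gPhi m i 0 in
  let RB : 'cV[R]_d := \sum_(m < M) \sum_(z <- B)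
      (lambda m 0 / nB) *: ((JPhi z.1 - EJ)^T *m gf m z) in
  (@simplex R M lambda) -> 0 < l -> 0 < eps -> 0 < delta ->
  specnorm EJ <= l -> enorm (gradPhiF *m lambda) <= eps -> enorm RB <= delta ->
  enorm (gradWF *m lambda) <= l * eps + delta.
Proof.
move=> JPhi EJ gf nB gW gPhi gradWF gradPhiF RB _ l_gt0 _ _ EJ_le phiF_le RB_le.
have -> : gradWF *m lambda = RB + EJ^T *m (gradPhiF *m lambda).
  by rewrite !mulmx_cols (batch_gradient_centered _ EJ).
rewrite (le_trans (enormD _ _)) // addrC lerD //.
rewrite (le_trans (enorm_trmx_mulmx_le _ _)) //.
rewrite (le_trans (ler_wpM2r (enorm_ge0 _) EJ_le)) //.
exact: (ler_wpM2l (ltW l_gt0) phiF_le).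
Qed.
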